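(* Let $G$ be a group and $S\subset G$ a finite generating set with $S\cap S^{-1}=\emptyset$. Assume that there are no $a,b,c\in S$ with $abc=e$ in $G$, and that $\langle S\mid R\rangle$ with $R=\{a\cdot b\cdot c^{-1}\mid a,b,c\in S,\ abc^{-1}=e \text{ in } G\}$ is a presentation of $G$. Then the action of $G$ on $Flag(G,S)$ by left multiplication is free.
   Context: For a group $G$ and a finite generating set $S\subset G$ with $S\cap S^{-1}=\emptyset$, the Cayley graph $\Gamma(G,S)$ has vertex set $\{v[g]\mid g\in G\}$ and, for each $g\in G$, $s\in S$, a directed edge from $v[g]$ to $v[gs]$; the underlying undirected graph is simple. $Flag(G,S)$ denotes the flag complex of $\Gamma(G,S)$ (a simplex for every finite set of pairwise adjacent vertices), on which $G$ acts by left multiplication. *)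

From Stdlib Require Import List.
Import ListNotations.

Record Group := {
  carrier :> Type;
  gmul : carrier -> carrier -> carrier;
  ginv : carrier -> carrier;
  gone : carrier;
  gmulA : forall x y z, gmul x (gmul y z) = gmul (gmul x y) z;
  gmul1l : forall x, gmul gone x = x;
  gmulVl : forall x, gmul (ginv x) x = gone
}.

Arguments gmul {G} : rename.
Arguments ginv {G} : rename.
Arguments gone {G} : rename.

Section Defs.
Variable G : Group.

(* Words in the letters S ∪ S^{-1}: (s, true) stands for s, (s, false) for s^{-1}. *)
Definition word := list (G * bool).

Definition letter_val (l : G * bool) : G :=
  if snd l then fst l else ginv (fst l).

Fixpoint eval (w : word) : G :=
  match w with
  | [] => gone
  | l :: w' => gmul (letter_val l) (eval w')
  end.

Definition word_over (S : list G) (w : word) : Prop :=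
  forall l, In l w -> In (fst l) S.

Definition generates (S : list G) : Prop :=
  forall g : G, exists w, word_over S w /\ eval w = g.

Definition relator (S : list G) (r : word) : Prop :=
  exists a b c, In a S /\ In b S /\ In c S /\
    gmul (gmul a b) (ginv c) = gone /\
    r = [(a, true); (b, true); (c, false)].

(* Equality in the group <S | R>: the congruence on words generated by
   free reductions and insertion/deletion of relators (i.e. equality in
   F(S) modulo the normal closure of R). *)
Inductive pres_eq (S : list G) (R : word -> Prop) : word -> word -> Prop :=
  | pe_refl w : pres_eq S R w w
  | pe_sym u v : pres_eq S R u v -> pres_eq S R v u
  | pe_trans u v w : pres_eq S R u v -> pres_eq S R v w -> pres_eq S R u w
  | pe_free u v x b : In x S ->
      pres_eq S R (u ++ v) (u ++ (x, b) :: (x, negb b) :: v)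
  | pe_rel u v r : R r -> pres_eq S R (u ++ v) (u ++ r ++ v).

Definition is_presentation (S : list G) (R : word -> Prop) : Prop :=
  generates S /\
  forall w, word_over S w -> eval w = gone -> pres_eq S R w [].

(* Adjacency in the underlying undirected graph of the Cayley graph Γ(G,S):
   edge v[g] -> v[g s] for s in S. *)
Definition cayley_adj (S : list G) (x y : G) : Prop :=
  In (gmul (ginv x) y) S \/ In (gmul (ginv y) x) S.

Definition flag_simplex (S : list G) (sigma : list G) : Prop :=
  sigma <> [] /\
  forall x y, In x sigma -> In y sigma -> x <> y -> cayley_adj S x y.

Definition flag_action_free (S : list G) : Prop :=
  forall (g : G) (sigma : list G), flag_simplex S sigma ->
    (forall x, In x sigma -> In (gmul g x) sigma) ->
    (forall y, In y sigma -> exists x, In x sigma /\ y = gmul g x) ->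
    g = gone.

End Defs.

From Stdlib Require Import List Arith Lia Classical FinFun.

(* Suppose g <> e fixes a simplex sigma setwise and pick x in sigma.  Then
   x and g x are distinct vertices of sigma, hence adjacent, so up to
   replacing g by g^{-1} the conjugate h = x^{-1} g x lies in S.  Since
   g^k x = x h^k, every x h^k is a vertex of sigma; whenever h^k <> e it is
   adjacent to x, so h^k or h^{-k} lies in S.  An induction on k using
   S ∩ S^{-1} = ∅ (to rule out h^{k+1} = e) and the absence of triangles
   abc = e in S (to rule out h^{-(k+1)} ∈ S) shows h^k ∈ S for all k >= 1.
   Elements of S are non-trivial, so the powers of h are pairwise distinct
   and the orbit {g^k x} is infinite, contradicting the finiteness of sigma. *)

Section GroupFacts.
Variable G : Group.

Lemma mulV (x : G) : gmul x (ginv x) = gone.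
Proof.
  rewrite <- (gmul1l G (gmul x (ginv x))).
  rewrite <- (gmulVl G (ginv x)) at 1.
  rewrite <- gmulA, (gmulA _ (ginv x) x (ginv x)), gmulVl, gmul1l.
  apply gmulVl.
Qed.

Lemma mul1r (x : G) : gmul x gone = x.
Proof. rewrite <- (gmulVl G x), gmulA, mulV. apply gmul1l. Qed.

Lemma cancel_l (a b c : G) : gmul a b = gmul a c -> b = c.
Proof.
  intro H. rewrite <- (gmul1l G b), <- (gmul1l G c), <- (gmulVl G a),
    <- !gmulA, H. reflexivity.
Qed.

Lemma inv_uniq (a b : G) : gmul a b = gone -> b = ginv a.
Proof. intro H. apply (cancel_l a). rewrite H, mulV. reflexivity. Qed.

Lemma inv1 : ginv (@gone G) = gone.
Proof. symmetry. apply inv_uniq. apply gmul1l. Qed.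

Lemma inv_mul (x y : G) : ginv (gmul x y) = gmul (ginv y) (ginv x).
Proof.
  symmetry. apply inv_uniq.
  rewrite <- gmulA, (gmulA _ y (ginv y) (ginv x)), mulV, gmul1l. apply mulV.
Qed.

Fixpoint gpow (g : G) (k : nat) : G :=
  match k with 0 => gone | S k => gmul g (gpow g k) end.

Lemma gpow1 (g : G) : gpow g 1 = g.
Proof. apply mul1r. Qed.

Lemma gpow_add (g : G) (i j : nat) : gpow g (i + j) = gmul (gpow g i) (gpow g j).
Proof.
  induction i as [|i IH]; simpl.
  - now rewrite gmul1l.
  - now rewrite IH, gmulA.
Qed.

Lemma gpow_conj (g x : G) (k : nat) :
  gmul (gpow g k) x = gmul x (gpow (gmul (ginv x) (gmul g x)) k).
Proof.
  induction k as [|k IH]; simpl.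
  - now rewrite gmul1l, mul1r.
  - rewrite <- gmulA, IH, !gmulA, mulV, gmul1l. reflexivity.
Qed.

(* If h^{i+m} = h^i then h^m = e; hence powers of h are pairwise distinct
   as soon as no positive power of h is trivial. *)
Lemma gpow_injective (h : G) :
  (forall k, gpow h (S k) <> gone) -> Injective (gpow h).
Proof.
  intros Hnontriv.
  assert (Hshift : forall i m, gpow h i = gpow h (i + m) -> m = 0).
  { intros i [|m] E; [reflexivity|exfalso].
    rewrite gpow_add, <- (mul1r (gpow h i)) in E at 1.
    exact (Hnontriv m (eq_sym (cancel_l _ _ _ E))). }
  intros i j E. destruct (Nat.lt_total i j) as [L|[L|L]]; auto.
  - replace j with (i + (j - i)) in E by lia. apply Hshift in E. lia.
  - symmetry in E. replace i with (j + (i - j)) in E by lia.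
    apply Hshift in E. lia.
Qed.

End GroupFacts.

Arguments gpow {G}.

Lemma injective_seq_not_in_list (A : Type) (f : nat -> A) (l : list A) :
  Injective f -> (forall k, In (f k) l) -> False.
Proof.
  intros Hinj Hin.
  assert (ND : NoDup (map f (seq 0 (S (length l))))).
  { apply Injective_map_NoDup; [exact Hinj|apply seq_NoDup]. }
  apply NoDup_incl_length with (l' := l) in ND.
  - rewrite length_map, length_seq in ND. lia.
  - intros y Hy. apply in_map_iff in Hy. destruct Hy as [k [<- _]]. apply Hin.
Qed.

Section ConjugateInS.
Variables (G : Group) (S : list G).
Hypothesis HSinv : forall s t, In s S -> In t S -> s <> ginv t.
Hypothesis Hnotri : forall a b c, In a S -> In b S -> In c S ->
  gmul (gmul a b) c <> gone.

Lemma gen_nontrivial (s : G) : In s S -> s <> gone.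
Proof. intros Hs E. apply (HSinv s s Hs Hs). now rewrite E, inv1. Qed.

Lemma powers_in_S (h : G) :
  In h S ->
  (forall k, gpow h k <> gone -> In (gpow h k) S \/ In (ginv (gpow h k)) S) ->
  forall k, In (gpow h (1 + k)) S.
Proof.
  intros Hh Hpow. induction k as [|k IH].
  - now rewrite gpow1.
  - assert (Hne : gpow h (2 + k) <> gone).
    { intro E. exact (HSinv _ h IH Hh (inv_uniq _ _ _ E)). }
    destruct (Hpow _ Hne) as [Hin|Hinv]; [exact Hin|exfalso].
    apply (Hnotri _ _ _ Hh IH Hinv). apply mulV.
Qed.

Lemma no_conjugate_in_S (sigma : list G) (g x : G) :
  flag_simplex G S sigma -> In x sigma ->
  (forall y, In y sigma -> In (gmul g y) sigma) ->
  In (gmul (ginv x) (gmul g x)) S -> False.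
Proof.
  intros Hs Hx Hst Hh.
  set (h := gmul (ginv x) (gmul g x)) in *.
  assert (Horbit : forall k, In (gmul x (gpow h k)) sigma).
  { intro k. unfold h. rewrite <- gpow_conj.
    induction k as [|k IH]; simpl.
    - now rewrite gmul1l.
    - rewrite <- gmulA. now apply Hst. }
  assert (Hpow : forall k, gpow h k <> gone ->
            In (gpow h k) S \/ In (ginv (gpow h k)) S).
  { intros k Hk.
    assert (Hdist : x <> gmul x (gpow h k)).
    { intro E. apply Hk. apply (cancel_l G x). now rewrite mul1r. }
    destruct (proj2 Hs _ _ Hx (Horbit k) Hdist) as [A|A]; [left|right].
    - now rewrite gmulA, gmulVl, gmul1l in A.
    - now rewrite inv_mul, <- gmulA, gmulVl, mul1r in A. }
  assert (HinS := powers_in_S h Hh Hpow).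
  apply (injective_seq_not_in_list _ (fun k => gmul x (gpow h k)) sigma).
  - intros i j E. apply cancel_l in E. revert E.
    apply gpow_injective. intro k. exact (gen_nontrivial _ (HinS k)).
  - exact Horbit.
Qed.

End ConjugateInS.

Theorem mainTheorem2 (G : Group) (S : list G)
  (HSinv : forall s t, In s S -> In t S -> s <> ginv t)
  (Hnotri : forall a b c, In a S -> In b S -> In c S ->
              gmul (gmul a b) c <> gone)
  (Hpres : is_presentation G S (relator G S)) :
  flag_action_free G S.
Proof.
  intros g sigma Hs Hst Hsur.
  destruct (classic (g = gone)) as [E|Hg]; [exact E|exfalso].
  destruct sigma as [|x rest]; [now destruct Hs|].
  assert (Hx : In x (x :: rest)) by now left.
  assert (Hne : x <> gmul g x).
  { intro E. apply Hg.
    rewrite <- (mul1r G g), <- (mulV G x) at 1.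
    rewrite gmulA, <- E. apply mulV. }
  destruct (proj2 Hs _ _ Hx (Hst _ Hx) Hne) as [A|A].
  - exact (no_conjugate_in_S G S HSinv Hnotri _ g x Hs Hx Hst A).
  - (* otherwise g^{-1}, which also stabilises sigma, conjugates x into S *)
    apply (no_conjugate_in_S G S HSinv Hnotri _ (ginv g) x Hs Hx).
    + intros y Hy. destruct (Hsur y Hy) as [z [Hz ->]].
      rewrite gmulA, gmulVl, gmul1l. exact Hz.
    + rewrite inv_mul, <- gmulA in A. exact A.
Qed.
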